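(* Let $f_1^0, f_2^0, g_2^0, x^0\in\mathbb{R}$ with $\Delta := f_1^0-f_2^0>0$ and let $N\ge1$ be an integer. Let $\mu_1,L_1,\mu_2,L_2$ satisfy $0\le\mu_1<L_2\le L_1<\infty$, $\mu_2<L_2$, $\mu_2<L_1$, and either $\mu_2\ge0$, or $\mu_1>-\mu_2>0$ and $E:=\frac{L_2+\mu_2}{L_1L_2}\cdot\frac{L_2-L_1}{-\mu_2}+\mu_1^{-1}-L_1^{-1}\le0$. Let $p_1 := L_2^{-1}\frac{L_2-\mu_1}{L_1-\mu_1}+L_2^{-1}\big(1+\frac{L_2^{-1}-L_1^{-1}}{\mu_1^{-1}-L_1^{-1}}\big)$ (with $1/0$ interpreted as $\infty$ when $\mu_1=0$) and $U := -\sqrt{\frac{2\Delta}{p_1N}}$. Define, for $k=0,\dots,N$: $x^k = x^0-k\frac{U}{L_2}$, $g_1^k = g_2^0-(k-1)U$, $f_1^k = f_2(x^k)+\frac{N-k}{N}\Delta$, and for $k=0,\dots,N-1$: $\bar x^k = x^k-\frac{L_2-\mu_1}{L_1-\mu_1}\frac{U}{L_2}$. Define $f_2,f_1:\mathbb{R}\to\mathbb{R}$ by $f_2(x)=\frac12L_2(x-x^0)^2+g_2^0(x-x^0)+f_2^0$ and $f_1(x)=\frac12L_1(x-x^0)^2+g_1^0(x-x^0)+f_1^0$ for $x\le x^0$; $f_1(x)=\frac12L_1(x-x^k)^2+g_1^k(x-x^k)+f_1^k$ for $x\in[x^k,\bar x^k]$; $f_1(x)=\frac12\mu_1(x-x^{k+1})^2+g_1^{k+1}(x-x^{k+1})+f_1^{k+1}$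 for $x\in[\bar x^k,x^{k+1}]$ ($k=0,\dots,N-1$); $f_1(x)=\frac12L_1(x-x^N)^2+g_1^N(x-x^N)+f_1^N$ for $x\ge x^N$. Then $f_1\in\mathcal{F}_{\mu_1,L_1}$, $f_2\in\mathcal{F}_{\mu_2,L_2}$, and performing $N$ iterations of DCA ($x^{k+1}$ such that $\nabla f_1(x^{k+1})=\nabla f_2(x^k)$) on $F=f_1-f_2$ starting from $x^0$ produces the points $x^0,\dots,x^N$ and $$\tfrac12\min_{0\le k\le N}|\nabla f_1(x^k)-\nabla f_2(x^k)|^2=\frac{\Delta}{p_1N}.$$
   Context: For $\mu\in\mathbb{R}$ and $L\in(\mu,\infty]$, $\mathcal{F}_{\mu,L}$ is the class of proper lower semicontinuous functions $f$ with $f-\frac{\mu}{2}|\cdot|^2$ convex and $\frac{L}{2}|\cdot|^2-f$ convex (when $L<\infty$). A DCA iteration from $x$ on $F=f_1-f_2$ selects $g_2\in\partial f_2(x)$ and $x^+\in\operatorname{argmin}_w\{f_1(w)-g_2w\}$. *)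

From Stdlib Require Import Reals Lra.
From Coquelicot Require Import Coquelicot.
Open Scope R_scope.

Definition convex_R (f : R -> R) : Prop :=
  forall x y t, 0 <= t <= 1 -> f (t * x + (1 - t) * y) <= t * f x + (1 - t) * f y.

Definition lsc_R (f : R -> R) : Prop :=
  forall x eps, 0 < eps ->
    exists delta, 0 < delta /\ forall y, Rabs (y - x) < delta -> f x - eps < f y.

(** The class F_{mu,L} for a finite L (here f : R -> R is real-valued, hence proper). *)
Definition in_F (mu L : R) (f : R -> R) : Prop :=
  lsc_R f /\
  convex_R (fun x => f x - mu / 2 * x ^ 2) /\
  convex_R (fun x => L / 2 * x ^ 2 - f x).

(** One DCA iteration x -> x' on F = f1 - f2, for differentiable f2:
    g2 = grad f2(x) (the only element of the subdifferential) and
    x' in argmin_w { f1 w - g2 w }; we also record grad f1(x') = grad f2(x). *)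
Definition dca_step (f1 f2 : R -> R) (x x' : R) : Prop :=
  exists g2, is_derive f2 x g2 /\ is_derive f1 x' g2 /\
    (forall w, f1 x' - g2 * x' <= f1 w - g2 * w).

Fixpoint minN (h : nat -> R) (n : nat) : R :=
  match n with
  | O => h O
  | S n' => Rmin (minN h n') (h n)
  end.

Definition E_const (mu1 L1 mu2 L2 : R) : R :=
  (L2 + mu2) / (L1 * L2) * ((L2 - L1) / (- mu2)) + / mu1 - / L1.

Section Construction.
Variables (f10 f20 g20 x0 mu1 L1 L2 : R) (N : nat).

(** p1, with 1/mu1 = +oo when mu1 = 0 (so the fraction vanishes). *)
Definition p1 : R :=
  / L2 * ((L2 - mu1) / (L1 - mu1)) +
  / L2 * (1 + (if Req_EM_T mu1 0 then 0 else (/ L2 - / L1) / (/ mu1 - / L1))).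

Definition Uc : R := - sqrt (2 * (f10 - f20) / (p1 * INR N)).

Definition xs (k : nat) : R := x0 - INR k * Uc / L2.
Definition g1s (k : nat) : R := g20 - (INR k - 1) * Uc.
Definition f2fun (x : R) : R := 1 / 2 * L2 * (x - x0) ^ 2 + g20 * (x - x0) + f20.
Definition f1s (k : nat) : R := f2fun (xs k) + (INR N - INR k) / INR N * (f10 - f20).
Definition xbars (k : nat) : R := xs k - (L2 - mu1) / (L1 - mu1) * Uc / L2.

Definition pieceL (k : nat) (x : R) : R :=
  1 / 2 * L1 * (x - xs k) ^ 2 + g1s k * (x - xs k) + f1s k.
Definition pieceM (k : nat) (x : R) : R :=
  1 / 2 * mu1 * (x - xs (S k)) ^ 2 + g1s (S k) * (x - xs (S k)) + f1s (S k).

Fixpoint f1_search (k fuel : nat) (x : R) : R :=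
  match fuel with
  | O => 0
  | S fuel' =>
      if Rle_dec (xs k) x then
        if Rle_dec x (xbars k) then pieceL k x
        else if Rle_dec x (xs (S k)) then pieceM k x
        else f1_search (S k) fuel' x
      else f1_search (S k) fuel' x
  end.

Definition f1fun (x : R) : R :=
  if Rle_dec x x0 then 1 / 2 * L1 * (x - x0) ^ 2 + g1s 0 * (x - x0) + f10
  else if Rle_dec (xs N) x then pieceL N x
  else f1_search 0 N x.

End Construction.

From Stdlib Require Import Reals Lra Lia.
From Coquelicot Require Import Coquelicot.
Open Scope R_scope.

(** Subtracting the hinges (t - a)_+^2 at the breakpoints from the
    first quadratic piece gives a single global formula for f1, which is differentiable
    everywhere with a derivative whose increments lie between mu1 and L1 times those of t;
    this is membership in F_{mu1,L1}, and makes f1 - g t convex, so that matching slopes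
    f1'(x^{k+1}) = f2'(x^k) is exactly a DCA step.  At every node f1' - f2' equals the
    constant U, and p1 is precisely the constant for which the pieces glue together. *)

Section DerivativeCriteria.
Variables (f f' : R -> R).
Hypothesis f_deriv : forall x, is_derive f x (f' x).

Lemma lsc_R_of_derive : lsc_R f.
Proof.
  intros x eps Heps.
  assert (Hc : continuity_pt f x).
  { apply continuity_pt_filterlim, (ex_derive_continuous f x). exists (f' x). apply f_deriv. }
  destruct (Hc eps Heps) as [delta [Hdelta Hnear]].
  exists delta. split; [exact Hdelta|]. intros y Hy.
  destruct (Req_dec y x) as [-> | Hne]; [lra|].
  assert (Hfy : R_dist (f y) (f x) < eps).
  { apply Hnear. split; [split; [exact I | congruence] | exact Hy]. }
  unfold R_dist in Hfy. apply Rabs_def2 in Hfy. lra.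
Qed.

Section Nondecreasing.
Hypothesis f'_incr : forall x y, x <= y -> f' x <= f' y.

Lemma tangent_le z w : f z + f' z * (w - z) <= f w.
Proof.
  assert (f_deriv_pt : forall c, derivable_pt_lim f c (f' c))
    by (intros c; apply is_derive_Reals, f_deriv).
  destruct (Rtotal_order z w) as [Hlt | [-> | Hgt]].
  - destruct (MVT_cor2 f f' z w Hlt (fun c _ => f_deriv_pt c)) as [c [Hmvt Hc]].
    assert (f' z <= f' c) by (apply f'_incr; lra). nra.
  - lra.
  - destruct (MVT_cor2 f f' w z Hgt (fun c _ => f_deriv_pt c)) as [c [Hmvt Hc]].
    assert (f' c <= f' z) by (apply f'_incr; lra). nra.
Qed.

Lemma convex_R_of_deriv_incr : convex_R f.
Proof.
  intros x y t Ht.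
  set (z := t * x + (1 - t) * y).
  assert (Hx := Rmult_le_compat_l t _ _ (proj1 Ht) (tangent_le z x)).
  assert (Hy := Rmult_le_compat_l (1 - t) _ _ ltac:(lra) (tangent_le z y)).
  assert (t * (x - z) + (1 - t) * (y - z) = 0) by (unfold z; ring).
  nra.
Qed.

End Nondecreasing.
End DerivativeCriteria.

Lemma in_F_of_deriv_bounds (mu L : R) (f f' : R -> R) :
  (forall x, is_derive f x (f' x)) ->
  (forall t s, t <= s -> mu * (s - t) <= f' s - f' t <= L * (s - t)) ->
  in_F mu L f.
Proof.
  intros f_deriv f'_bounds.
  split; [|split].
  - exact (lsc_R_of_derive f f' f_deriv).
  - apply (convex_R_of_deriv_incr _ (fun x => f' x - mu * x)).
    + intros x. apply (is_derive_minus f (fun y => mu / 2 * y ^ 2)); [apply f_deriv|].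
      auto_derive; [exact I | field].
    + intros x y Hxy. specialize (f'_bounds x y Hxy). lra.
  - apply (convex_R_of_deriv_incr _ (fun x => L * x - f' x)).
    + intros x. apply (is_derive_minus (fun y => L / 2 * y ^ 2) f); [|apply f_deriv].
      auto_derive; [exact I | field].
    + intros x y Hxy. specialize (f'_bounds x y Hxy). lra.
Qed.

Lemma dca_step_of_deriv (f1 f1' f2 : R -> R) (x x' g : R) :
  (forall t, is_derive f1 t (f1' t)) -> (forall t s, t <= s -> f1' t <= f1' s) ->
  is_derive f2 x g -> f1' x' = g -> dca_step f1 f2 x x'.
Proof.
  intros f1_deriv f1'_incr f2_deriv Hslope. exists g.
  split; [exact f2_deriv|]. rewrite <- Hslope. split; [apply f1_deriv|].
  intros w. pose proof (tangent_le f1 f1' f1_deriv f1'_incr x' w). lra.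
Qed.

Lemma minN_const (h : nat -> R) (c : R) (n : nat) :
  (forall k, (k <= n)%nat -> h k = c) -> minN h n = c.
Proof.
  induction n as [|n IH]; intros Hh; simpl.
  - apply Hh; lia.
  - rewrite IH by (intros; apply Hh; lia).
    rewrite Hh by lia. apply Rmin_left, Rle_refl.
Qed.

Lemma hinge_sq_expansion (u h : R) :
  Rabs (Rmax 0 (u + h) ^ 2 - Rmax 0 u ^ 2 - 2 * Rmax 0 u * h) <= h ^ 2.
Proof.
  apply Rabs_le. unfold Rmax.
  destruct (Rle_dec 0 (u + h)), (Rle_dec 0 u); split; nra.
Qed.

Lemma is_derive_hinge_sq (a x : R) :
  is_derive (fun t => Rmax 0 (t - a) ^ 2) x (2 * Rmax 0 (x - a)).
Proof.
  apply is_derive_Reals. intros eps Heps.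
  exists (mkposreal eps Heps). intros h Hh0 Hh. simpl in Hh.
  assert (Habs_pos : 0 < Rabs h) by (apply Rabs_pos_lt; exact Hh0).
  pose proof (hinge_sq_expansion (x - a) h) as Hexp.
  replace (x + h - a) with (x - a + h) by ring.
  replace ((Rmax 0 (x - a + h) ^ 2 - Rmax 0 (x - a) ^ 2) / h - 2 * Rmax 0 (x - a))
    with ((Rmax 0 (x - a + h) ^ 2 - Rmax 0 (x - a) ^ 2 - 2 * Rmax 0 (x - a) * h) / h)
    by (field; exact Hh0).
  rewrite <- (pow2_abs h) in Hexp. unfold Rdiv. rewrite Rabs_mult, Rabs_inv.
  apply Rmult_lt_reg_r with (Rabs h); [exact Habs_pos|].
  rewrite Rmult_assoc, Rinv_l by lra. nra.
Qed.

Section HingeSums.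
Variables (x z : nat -> R).
Hypothesis interlace : forall j, x j <= z j <= x (S j).

(* With [phi = id], [hinge_sum phi n t] is the length of the part of the gaps
   [z j, x (S j)], j < n, lying to the left of t. *)
Fixpoint hinge_sum (phi : R -> R) (n : nat) (t : R) : R :=
  match n with
  | O => 0
  | S m => hinge_sum phi m t + (phi (Rmax 0 (t - z m)) - phi (Rmax 0 (t - x (S m))))
  end.

Lemma interlace_le j k : (j <= k)%nat -> x j <= x k /\ z j <= z k.
Proof.
  induction 1 as [|k _ [IHx IHz]]; [lra|].
  pose proof (interlace k). pose proof (interlace (S k)). lra.
Qed.

Lemma hinge_sum_tail (phi : R -> R) (n k : nat) (t : R) :
  phi 0 = 0 -> (k <= n)%nat -> t <= z k -> hinge_sum phi n t = hinge_sum phi k t.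
Proof.
  intros phi0 Hkn Ht. induction Hkn as [|n Hkn IH]; [reflexivity|].
  simpl. rewrite IH.
  destruct (interlace_le k n Hkn) as [_ Hz]. pose proof (interlace n).
  rewrite !Rmax_left, phi0 by lra. ring.
Qed.

Lemma hinge_sum_head (phi : R -> R) (Q : nat -> R) (c : R) (k : nat) (t : R) :
  (forall j, Q (S j) = Q j - c * (phi (t - z j) - phi (t - x (S j)))) ->
  x k <= t -> Q O - c * hinge_sum phi k t = Q k.
Proof.
  intros HQ. induction k as [|k IH]; intros Ht; simpl; [ring|].
  destruct (interlace_le k (S k) (Nat.le_succ_diag_r k)) as [Hx _]. pose proof (interlace k).
  rewrite HQ, <- IH, !Rmax_right by lra. ring.
Qed.

Lemma hinge_sum_gap (phi : R -> R) (k : nat) (t : R) :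
  phi 0 = 0 -> t <= x (S k) -> hinge_sum phi (S k) t = hinge_sum phi k t + phi (Rmax 0 (t - z k)).
Proof.
  intros phi0 Ht. simpl. rewrite (Rmax_left 0 (t - x (S k))), phi0 by lra. ring.
Qed.

Lemma is_derive_hinge_sum_sq (n : nat) (t : R) :
  is_derive (hinge_sum (fun u => u ^ 2) n) t (2 * hinge_sum (fun u => u) n t).
Proof.
  induction n as [|n IH]; simpl.
  - apply (is_derive_ext (fun _ => 0)); [reflexivity|]. auto_derive; [exact I | ring].
  - rewrite Rmult_plus_distr_l, Rmult_minus_distr_l.
    apply (is_derive_plus (hinge_sum (fun u => u ^ 2) n)); [exact IH|].
    apply (is_derive_minus (fun y => Rmax 0 (y - z n) ^ 2)); apply is_derive_hinge_sq.
Qed.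

Lemma hinge_sum_incr (n : nat) (t s : R) :
  t <= s -> 0 <= hinge_sum (fun u => u) n s - hinge_sum (fun u => u) n t <= s - t.
Proof.
  intros Hts.
  enough (Hinv : 0 <= hinge_sum (fun u => u) n s - hinge_sum (fun u => u) n t
                   <= (Rmin s (x n) - Rmin t (x n)) - (Rmin s (x O) - Rmin t (x O))).
  { unfold Rmin in *. repeat destruct Rle_dec; lra. }
  induction n as [|n IH]; simpl; [lra|].
  pose proof (interlace n). unfold Rmin, Rmax in *. repeat destruct Rle_dec; lra.
Qed.

End HingeSums.

Lemma is_derive_f2fun (f20 g20 x0 L2 t : R) :
  is_derive (f2fun f20 g20 x0 L2) t (L2 * (t - x0) + g20).
Proof. unfold f2fun. auto_derive; [exact I | field]. Qed.

Section Construction.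
Variables (f10 f20 g20 x0 mu1 L1 L2 : R) (N : nat).
Hypotheses (gap_pos : 0 < f10 - f20) (N_pos : (1 <= N)%nat)
  (mu1_nonneg : 0 <= mu1) (mu1_lt_L2 : mu1 < L2) (L2_le_L1 : L2 <= L1).

Local Notation p := (p1 mu1 L1 L2).
Local Notation U := (Uc f10 f20 mu1 L1 L2 N).
Local Notation x := (xs f10 f20 x0 mu1 L1 L2 N).
Local Notation xbar := (xbars f10 f20 x0 mu1 L1 L2 N).
Local Notation g1 := (g1s f10 f20 g20 mu1 L1 L2 N).
Local Notation PL := (pieceL f10 f20 g20 x0 mu1 L1 L2 N).
Local Notation PM := (pieceM f10 f20 g20 x0 mu1 L1 L2 N).

Lemma p1_eq :
  p = ((L2 - mu1) * L2 + (L1 - mu1) * L2 + (L1 - L2) * mu1) / (L2 ^ 2 * (L1 - mu1)).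
Proof. unfold p1. destruct Req_EM_T as [-> | Hmu1]; field; repeat split; lra. Qed.

Lemma p1_pos : 0 < p.
Proof.
  rewrite p1_eq. apply Rdiv_lt_0_compat; [nra|].
  apply Rmult_lt_0_compat; [apply pow_lt|]; lra.
Qed.

Lemma INR_N_pos : 0 < INR N.
Proof. apply lt_0_INR. lia. Qed.

Lemma U_sq : U ^ 2 = 2 * (f10 - f20) / (p * INR N).
Proof.
  unfold Uc. rewrite <- Rsqr_pow2, <- Rsqr_neg. apply Rsqr_sqrt.
  pose proof p1_pos. pose proof INR_N_pos.
  apply Rlt_le, Rdiv_lt_0_compat; [lra | apply Rmult_lt_0_compat; lra].
Qed.

Lemma U_neg : U < 0.
Proof.
  unfold Uc. apply Ropp_lt_gt_0_contravar, sqrt_lt_R0.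
  pose proof p1_pos. pose proof INR_N_pos.
  apply Rdiv_lt_0_compat; [lra | apply Rmult_lt_0_compat; lra].
Qed.

Lemma gap_eq_U : f10 - f20 = p * INR N * U ^ 2 / 2.
Proof.
  rewrite U_sq. pose proof p1_pos. pose proof INR_N_pos. field. lra.
Qed.

Lemma xs_0 : x O = x0.
Proof. unfold xs. simpl. field. lra. Qed.

Lemma xs_S k : x (S k) = x k - U / L2.
Proof. unfold xs. rewrite S_INR. field. lra. Qed.

Lemma xs_interlace k : x k <= xbar k <= x (S k).
Proof.
  assert (Hstep : 0 < - U / L2) by (apply Rdiv_lt_0_compat; pose proof U_neg; lra).
  assert (Hratio : 0 < (L2 - mu1) / (L1 - mu1) <= 1).
  { split; [apply Rdiv_lt_0_compat; lra|]. apply (Rdiv_le_1 (L2 - mu1) (L1 - mu1)); lra. }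
  unfold xbars. rewrite xs_S.
  replace ((L2 - mu1) / (L1 - mu1) * U / L2) with (- ((L2 - mu1) / (L1 - mu1) * (- U / L2)))
    by (field; lra).
  replace (U / L2) with (- (- U / L2)) by (field; lra).
  nra.
Qed.

(* This is where p1 comes from: f1 - f2 must drop by (f10 - f20) / N = p1 U^2 / 2
   from one node to the next. *)
Lemma pieceM_eq k t : PM k t = PL k t - (L1 - mu1) / 2 * (t - xbar k) ^ 2.
Proof.
  pose proof gap_eq_U as Hgap. pose proof INR_N_pos.
  unfold pieceM, pieceL, f1s, f2fun, g1s, xbars, xs in *.
  set (u := Uc f10 f20 mu1 L1 L2 N) in *. clearbody u.
  rewrite Hgap, p1_eq, S_INR. field. repeat split; lra.
Qed.

Lemma pieceL_S k t :
  PL (S k) t = PL k t - (L1 - mu1) / 2 * ((t - xbar k) ^ 2 - (t - x (S k)) ^ 2).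
Proof.
  transitivity (PM k t + (L1 - mu1) / 2 * (t - x (S k)) ^ 2).
  - unfold pieceM, pieceL. field.
  - rewrite pieceM_eq. field.
Qed.

Definition f1_hinge (t : R) : R :=
  PL O t - (L1 - mu1) / 2 * hinge_sum x xbar (fun u => u ^ 2) N t.

Definition f1_slope (t : R) : R :=
  L1 * (t - x0) + g1 O - (L1 - mu1) * hinge_sum x xbar (fun u => u) N t.

Lemma f1_hinge_head k t : x k <= t ->
  PL O t - (L1 - mu1) / 2 * hinge_sum x xbar (fun u => u ^ 2) k t = PL k t.
Proof.
  apply (hinge_sum_head x xbar xs_interlace (fun u => u ^ 2) (fun j => PL j t)).
  intros j. apply pieceL_S.
Qed.

Lemma f1_hinge_tail k t : (k <= N)%nat -> t <= xbar k ->
  hinge_sum x xbar (fun u => u ^ 2) N t = hinge_sum x xbar (fun u => u ^ 2) k t.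
Proof. apply hinge_sum_tail; [exact xs_interlace | ring]. Qed.

Lemma f1_hinge_left t : t <= x0 -> f1_hinge t = PL O t.
Proof.
  intros Ht. pose proof (xs_interlace O). rewrite xs_0 in *.
  unfold f1_hinge. rewrite (f1_hinge_tail O) by (lia || lra). simpl. ring.
Qed.

Lemma f1_hinge_node k t : (k <= N)%nat -> x k <= t <= xbar k -> f1_hinge t = PL k t.
Proof.
  intros Hk Ht. unfold f1_hinge. rewrite (f1_hinge_tail k) by (lia || lra).
  apply f1_hinge_head. lra.
Qed.

Lemma f1_hinge_right t : x N <= t -> f1_hinge t = PL N t.
Proof. apply f1_hinge_head. Qed.

Lemma f1_hinge_gap k t : (k < N)%nat -> xbar k <= t <= x (S k) -> f1_hinge t = PM k t.
Proof.
  intros Hk Ht. pose proof (xs_interlace k). pose proof (xs_interlace (S k)).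
  unfold f1_hinge. rewrite (f1_hinge_tail (S k)) by (lia || lra).
  rewrite hinge_sum_gap, Rmax_right by (ring || lra).
  rewrite pieceM_eq, <- (f1_hinge_head k) by lra. ring.
Qed.

Lemma f1_search_eq fuel j t : (j + fuel <= N)%nat -> x j <= t -> t < x (j + fuel) ->
  f1_search f10 f20 g20 x0 mu1 L1 L2 N j fuel t = f1_hinge t.
Proof.
  revert j. induction fuel as [|fuel IH]; intros j Hj Hlow Hhigh; simpl.
  - rewrite Nat.add_0_r in Hhigh. lra.
  - destruct (Rle_dec (x j) t) as [_ | Hnot]; [|lra].
    destruct (Rle_dec t (xbar j)) as [Hnode | Hnode].
    { symmetry. apply f1_hinge_node; [lia | lra]. }
    destruct (Rle_dec t (x (S j))) as [Hgap | Hgap].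
    { symmetry. apply f1_hinge_gap; [lia | lra]. }
    apply IH; [lia | lra | now rewrite Nat.add_succ_comm].
Qed.

Lemma f1fun_eq t : f1fun f10 f20 g20 x0 mu1 L1 L2 N t = f1_hinge t.
Proof.
  unfold f1fun. destruct (Rle_dec t x0) as [Hleft | Hleft].
  - rewrite f1_hinge_left by exact Hleft.
    pose proof INR_N_pos. unfold pieceL, f1s, f2fun, g1s, xs. simpl. field. lra.
  - destruct (Rle_dec (x N) t) as [Hright | Hright].
    + symmetry. apply f1_hinge_right, Hright.
    + apply (f1_search_eq N O); [lia | rewrite xs_0; lra | simpl; lra].
Qed.

Lemma is_derive_f1fun t : is_derive (f1fun f10 f20 g20 x0 mu1 L1 L2 N) t (f1_slope t).
Proof.
  apply (is_derive_ext f1_hinge); [intros y; symmetry; apply f1fun_eq|].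
  unfold f1_hinge, f1_slope.
  replace (L1 * (t - x0) + g1 O - (L1 - mu1) * hinge_sum x xbar (fun u => u) N t)
    with (L1 * (t - x0) + g1 O - (L1 - mu1) / 2 * (2 * hinge_sum x xbar (fun u => u) N t))
    by field.
  apply (is_derive_minus (PL O)
           (fun y => (L1 - mu1) / 2 * hinge_sum x xbar (fun u => u ^ 2) N y)).
  - unfold pieceL. rewrite xs_0. auto_derive; [exact I | field].
  - apply (is_derive_scal (hinge_sum x xbar (fun u => u ^ 2) N)), is_derive_hinge_sum_sq.
Qed.

Lemma f1_slope_incr t s : t <= s -> mu1 * (s - t) <= f1_slope s - f1_slope t <= L1 * (s - t).
Proof.
  intros Hts. pose proof (hinge_sum_incr x xbar xs_interlace N t s Hts). unfold f1_slope. nra.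
Qed.

Lemma f1_slope_node k : (k <= N)%nat -> f1_slope (x k) = g1 k.
Proof.
  intros Hk. pose proof (xs_interlace k). unfold f1_slope.
  rewrite (hinge_sum_tail x xbar xs_interlace _ N k) by (reflexivity || lia || lra).
  assert (Hhead := hinge_sum_head x xbar xs_interlace (fun u => u)
                     (fun j => L1 * (x k - x j) + g1 j) (L1 - mu1) k (x k)).
  cbv beta in Hhead. rewrite xs_0 in Hhead. rewrite Hhead; [ring | | lra].
  intros j. rewrite xs_S. unfold xbars, g1s. rewrite S_INR. field. lra.
Qed.

Lemma f1_slope_nondecreasing t s : t <= s -> f1_slope t <= f1_slope s.
Proof. intros Hts. pose proof (f1_slope_incr t s Hts). nra. Qed.

Lemma f2_slope_node k : L2 * (x k - x0) + g20 = g1 (S k).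
Proof. unfold xs, g1s. rewrite S_INR. field. lra. Qed.

Lemma slope_gap_node k : (k <= N)%nat -> f1_slope (x k) - (L2 * (x k - x0) + g20) = U.
Proof.
  intros Hk. rewrite f1_slope_node, f2_slope_node by exact Hk.
  unfold g1s. rewrite S_INR. ring.
Qed.

Lemma half_U_sq : 1 / 2 * U ^ 2 = (f10 - f20) / (p * INR N).
Proof. rewrite U_sq. pose proof p1_pos. pose proof INR_N_pos. field. lra. Qed.

End Construction.

Theorem proposition5 (f10 f20 g20 x0 mu1 L1 mu2 L2 : R) (N : nat) :
  0 < f10 - f20 ->
  (1 <= N)%nat ->
  0 <= mu1 -> mu1 < L2 -> L2 <= L1 ->
  mu2 < L2 -> mu2 < L1 ->
  (0 <= mu2 \/ ((0 < - mu2 /\ - mu2 < mu1) /\ E_const mu1 L1 mu2 L2 <= 0)) ->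
  let x := xs f10 f20 x0 mu1 L1 L2 N in
  let F1 := f1fun f10 f20 g20 x0 mu1 L1 L2 N in
  let F2 := f2fun f20 g20 x0 L2 in
  in_F mu1 L1 F1 /\ in_F mu2 L2 F2 /\
  (forall k, (k <= N)%nat -> ex_derive F1 (x k) /\ ex_derive F2 (x k)) /\
  (forall k, (k < N)%nat -> dca_step F1 F2 (x k) (x (S k))) /\
  1 / 2 * minN (fun k => Rabs (Derive F1 (x k) - Derive F2 (x k)) ^ 2) N
    = (f10 - f20) / (p1 mu1 L1 L2 * INR N).
Proof.
  (* f2 is a quadratic of curvature L2, so mu2 < L2 alone puts it in F_{mu2,L2}. *)
  intros gap_pos N_pos mu1_nonneg mu1_lt_L2 L2_le_L1 mu2_lt_L2 _ _ x F1 F2.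
  pose (slope1 := f1_slope f10 f20 g20 x0 mu1 L1 L2 N).
  assert (dF1 : forall t, is_derive F1 t (slope1 t)) by (intros t; now apply is_derive_f1fun).
  assert (dF2 := is_derive_f2fun f20 g20 x0 L2).
  assert (slope1_incr : forall t s, t <= s -> slope1 t <= slope1 s)
    by (intros t s; now apply f1_slope_nondecreasing).
  split; [|split; [|split; [|split]]].
  - apply (in_F_of_deriv_bounds _ _ _ _ dF1). intros t s. now apply f1_slope_incr.
  - apply (in_F_of_deriv_bounds _ _ _ _ dF2). intros t s Hts. nra.
  - intros k _. split; eexists; [apply dF1 | apply dF2].
  - intros k Hk. apply (dca_step_of_deriv F1 slope1 F2 _ _ _ dF1 slope1_incr (dF2 _)).
    unfold slope1, x. now rewrite f2_slope_node, f1_slope_node by (auto || lra).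
  - rewrite (minN_const _ (Uc f10 f20 mu1 L1 L2 N ^ 2)); [now apply half_U_sq|].
    intros k Hk. cbv beta.
    rewrite (is_derive_unique _ _ _ (dF1 _)), (is_derive_unique _ _ _ (dF2 _)).
    unfold slope1, x. now rewrite slope_gap_node, pow2_abs.
Qed.
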